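(* Assume the bipartite graph $\mathcal{T}$ is a tree of diameter $3$; then $\mathcal{T}$ has exactly two non-leaf nodes, $i_0\in\mathcal{I}$ and $j_0\in\mathcal{J}$. Assume moreover that $\theta_i\le\mu_{ij_0}$ for all $i\in\mathcal{I}$. Then the following nonidling property holds: for every $T>0$, if measurable locally bounded $(\psi,y,z,w)$ satisfy on $[0,T)$ $$\sum_{j\in\mathcal{J}}(\psi_{ij}+\mu_{ij}\mathfrak{J}\psi_{ij})=w_i-y_i-\theta_i\mathfrak{J}y_i\ (i\in\mathcal{I}),\quad \sum_{i\in\mathcal{I}}\psi_{ij}=-z_j\ (j\in\mathcal{J}),\quad y_i,z_j\ge0,\quad \min(e\cdot y,e\cdot z)=0$$ (with $\psi_{ij}=0$ for $i\not\sim j$), and if $w_i(0)>0$ and each $w_i$ is strictly increasing and right-continuous on $[0,T)$, then $z_j(t)=0$ for all $t\in[0,T)$ and $j\in\mathcal{J}$.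
   Context: $\mathcal{I}=\{1,\dots,I\}$, $\mathcal{J}=\{I+1,\dots,I+J\}$, $\mathcal{E}\subset\mathcal{I}\times\mathcal{J}$, $i\sim j$ iff $(i,j)\in\mathcal{E}$; $\mathcal{T}$ is the bipartite graph with vertices $\mathcal{I}\cup\mathcal{J}$ and edges $\mathcal{E}$. Constants $\mu_{ij}>0$ for $(i,j)\in\mathcal{E}$, $\mu_{ij}=0$ otherwise, $\theta_i\ge0$. $\mathfrak{J}f(t)=\int_0^tf(s)ds$, $e=(1,\dots,1)'$. *)

From HB Require Import structures.
From mathcomp Require Import all_boot all_order all_algebra.
From mathcomp Require Import all_classical all_reals all_analysis.
Set Implicit Arguments. Unset Strict Implicit. Unset Printing Implicit Defensive.
Import Order.TTheory GRing.Theory Num.Theory.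
Import numFieldNormedType.Exports.
Local Open Scope classical_set_scope.
Local Open Scope ring_scope.

(* Vertices of the bipartite graph T: inl i for i in I = 'I_nI,
   inr j for j in J = 'I_nJ.  Edge set E given as a relation on I x J. *)
Definition vtx (nI nJ : nat) := ('I_nI + 'I_nJ)%type.

Definition adj (nI nJ : nat) (E : 'I_nI -> 'I_nJ -> bool) : rel (vtx nI nJ) :=
  fun u v => match u, v with
             | inl i, inr j => E i j
             | inr j, inl i => E i j
             | _, _ => false
             end.

(* a walk from u to v with edge list length size p *)
Definition walk (V : eqType) (e : rel V) (u v : V) (p : seq V) : bool :=
  path e u p && (last u p == v).

Definition connected_graph (V : finType) (e : rel V) : Prop :=
  forall u v : V, exists p, walk e u v p.

Definition acyclic_graph (V : finType) (e : rel V) : Prop :=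
  forall c : seq V, (3 <= size c)%N -> uniq c -> ~~ cycle e c.

Definition is_tree (V : finType) (e : rel V) : Prop :=
  connected_graph e /\ acyclic_graph e.

Definition has_diameter (V : finType) (e : rel V) (d : nat) : Prop :=
  (forall u v : V, exists p, walk e u v p && (size p <= d)%N) /\
  (exists u v : V, (exists p, walk e u v p) /\
     forall p, walk e u v p -> (d <= size p)%N).

Definition degree (V : finType) (e : rel V) (u : V) : nat := #|[set v | e u v]|.

Definition nonleaf (V : finType) (e : rel V) (u : V) : Prop := (1 < degree e u)%N.

Definition Jint (R : realType) (f : R -> R) (t : R) : R :=
  \int[(@lebesgue_measure R)]_(s in `[0, t]) f s.

Definition locally_bounded_on (R : realType) (T : R) (f : R -> R) : Prop :=
  forall t, 0 <= t < T -> exists M : R, forall s, 0 <= s <= t -> `|f s| <= M.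

Definition strictly_increasing_on (R : realType) (T : R) (f : R -> R) : Prop :=
  forall s t, 0 <= s -> s < t -> t < T -> f s < f t.

Definition right_continuous_on (R : realType) (T : R) (f : R -> R) : Prop :=
  forall t, 0 <= t < T -> f x @[x --> t^'+] --> f t.

Definition mlb (R : realType) (T : R) (f : R -> R) : Prop :=
  measurable_fun `[0, T[ f /\ locally_bounded_on T f.

Definition nonidling (R : realType) (nI nJ : nat) (E : 'I_nI -> 'I_nJ -> bool)
  (mu : 'I_nI -> 'I_nJ -> R) (theta : 'I_nI -> R) : Prop :=
  forall T : R, 0 < T ->
  forall (psi : 'I_nI -> 'I_nJ -> R -> R) (y : 'I_nI -> R -> R)
         (z : 'I_nJ -> R -> R) (w : 'I_nI -> R -> R),
    (forall i j, mlb T (psi i j)) -> (forall i, mlb T (y i)) ->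
    (forall j, mlb T (z j)) -> (forall i, mlb T (w i)) ->
    (forall i j t, 0 <= t < T -> ~~ E i j -> psi i j t = 0) ->
    (forall i t, 0 <= t < T ->
       \sum_(j < nJ) (psi i j t + mu i j * Jint (psi i j) t)
         = w i t - y i t - theta i * Jint (y i) t) ->
    (forall j t, 0 <= t < T -> \sum_(i < nI) psi i j t = - z j t) ->
    (forall i t, 0 <= t < T -> 0 <= y i t) ->
    (forall j t, 0 <= t < T -> 0 <= z j t) ->
    (forall t, 0 <= t < T ->
       Num.min (\sum_(i < nI) y i t) (\sum_(j < nJ) z j t) = 0) ->
    (forall i, 0 < w i 0) ->
    (forall i, strictly_increasing_on T (w i)) ->
    (forall i, right_continuous_on T (w i)) ->
    forall t, 0 <= t < T -> forall j, z j t = 0.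

From HB Require Import structures.
From mathcomp Require Import all_boot all_order all_algebra.
From mathcomp Require Import all_classical all_reals all_analysis.
From mathcomp Require Import lra.
Import Order.TTheory GRing.Theory Num.Theory.
Local Open Scope classical_set_scope.
Local Open Scope ring_scope.
Set Implicit Arguments. Unset Strict Implicit. Unset Printing Implicit Defensive.

(* On the graph side: in a bipartite tree of diameter 3 two vertices on the
   same side are at distance 0 or 2, so two distinct branching vertices on one
   side would close a 4- or a 6-cycle, while the middle edge of a path
   realising the diameter provides a branching vertex on each side.

   On the analytic side, let G_i := sum_j mu_ij J psi_ij + theta_i J y_i (the
   [outflow]), so that the I-balance reads sum_j psi_ij + y_i = w_i - G_i;
   then G_i < w_i for all i forces z = 0 at that time.  The strict inequality
   is propagated by real induction.  It persists to the right since G_i is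
   Lipschitz and w_i nondecreasing.  If it holds before t but fails at t for
   some i, then z = 0 before t, every j <> j0 is a leaf so psi_ij = 0 there,
   and theta_i <= mu_ij0 gives G_i(t) - G_i(s) <= mu_ij0 int_s^t (w_i(t) - G_i);
   on a short enough interval this halves every upper bound of w_i(t) - G_i,
   which is therefore <= 0, contradicting w_i(s) > G_i(s). *)

Section Reals.
Variable R : realType.

Lemma real_induction (T : R) (P : R -> Prop) :
  (forall t, 0 <= t < T -> (forall s, 0 <= s < t -> P s) -> P t) ->
  (forall t, 0 <= t < T -> P t ->
     exists2 d, 0 < d & forall s, t < s < t + d -> s < T -> P s) ->
  forall t, 0 <= t < T -> P t.
Proof.
move=> left_closed right_open t0 t0T; apply: contrapT => notP.
pose F := [set s | 0 <= s < T /\ ~ P s].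
have F_t0 : F t0 by [].
have F_lb : has_lbound F by exists 0 => s [/andP[]].
pose ts := inf F.
have ts_le s : F s -> ts <= s by move=> Fs; exact: ge_inf.
have ts0 : 0 <= ts by apply: lb_le_inf; [exists t0 | move=> s [/andP[]]].
have tsT : ts < T by rewrite (le_lt_trans (ts_le _ F_t0)) //; case/andP: t0T.
have ts_range : 0 <= ts < T by rewrite ts0.
have P_before s : 0 <= s < ts -> P s.
  move=> /andP[s0 sts]; apply: contrapT => nPs.
  have : ts <= s by apply: ts_le; split; rewrite // s0 (lt_trans sts tsT).
  by rewrite leNgt sts.
have P_ts := left_closed ts ts_range P_before.
have [d d0 Pd] := right_open ts ts_range P_ts.
have [s [/andP[s0 sT] nPs] sd] : exists2 s, F s & s < ts + d.
  apply: inf_lt; first by exists t0.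
  by rewrite ltrDl.
have tss : ts < s.
  rewrite lt_neqAle ts_le ?andbT; last by split; rewrite ?s0.
  by apply/eqP => e; apply: nPs; rewrite -e.
by apply: nPs; apply: Pd; rewrite ?tss.
Qed.

Lemma le0_of_le_half_ubound (A : set R) (h : R -> R) :
  (exists B, forall s, A s -> h s <= B) ->
  (forall B, 0 <= B -> (forall s, A s -> h s <= B) -> forall s, A s -> h s <= B / 2) ->
  forall s, A s -> h s <= 0.
Proof.
move=> [B0 hB0] halve s As.
pose S := h @` A.
have S_ub : has_ubound S by exists B0 => _ [r Ar <-]; exact: hB0.
have S_sup r : A r -> h r <= sup S by move=> Ar; apply: ub_le_sup => //; exists r.
have [sup_le0|sup_gt0] := leP (sup S) 0; first exact: le_trans (S_sup s As) sup_le0.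
have : sup S <= sup S / 2.
  apply: ge_sup; first by exists (h s), s.
  by move=> _ [r Ar <-]; apply: halve => //; exact: ltW.
lra.
Qed.

Lemma common_radius (I : finType) (P : I -> R -> Prop) :
  (forall i, exists2 d : R, 0 < d & forall r, 0 <= r < d -> P i r) ->
  exists2 d : R, 0 < d & forall i r, 0 <= r < d -> P i r.
Proof.
move=> radius.
have /choice[d dP] : forall i, exists d : R, 0 < d /\ forall r, 0 <= r < d -> P i r.
  by move=> i; have [d d0 Pd] := radius i; exists d.
exists (\big[Order.min/1]_i d i) => [|i r /andP[r0 rd]].
  by apply: lt_bigmin => // i _; exact: (dP i).1.
by apply: (dP i).2; rewrite r0 (lt_le_trans rd) ?bigmin_le.
Qed.

Lemma small_step_for_rate (m t : R) : 0 <= m -> 0 < t ->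
  exists2 d, 0 < d <= t & m * d <= 2^-1.
Proof.
move=> m_ge0 t_gt0; have m1 : 0 < 2 * (m + 1) by rewrite mulr_gt0 // ltr_wpDl.
exists (Num.min t (2 * (m + 1))^-1); first by rewrite lt_min t_gt0 invr_gt0 m1 ge_min lexx.
apply: le_trans (ler_wpM2l m_ge0 (_ : _ <= (2 * (m + 1))^-1)) _; first by rewrite ge_min lexx orbT.
rewrite invfM mulrCA -[leRHS]mulr1 ler_wpM2l //.
by rewrite ler_pdivrMr ?mul1r ?lerDl // ltr_wpDl.
Qed.

Section Lipschitz.
Variables (g : R -> R) (C a b : R).
Hypothesis g_lip : forall s t, a <= s -> s <= t -> t <= b -> `|g t - g s| <= C * (t - s).

Lemma lipschitz_small_step e : 0 < e -> exists2 d, 0 < d &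
  forall s t, a <= s -> s <= t -> t <= b -> t - s < d -> `|g t - g s| < e.
Proof.
move=> e0; have C1 : 0 < `|C| + 1 by rewrite ltr_wpDl.
exists (e / (`|C| + 1)) => [|s t a_s st tb std]; first by rewrite divr_gt0.
apply: le_lt_trans (g_lip a_s st tb) _.
have ts0 : 0 <= t - s by rewrite subr_ge0.
apply: le_lt_trans (ler_wpM2r ts0 (ler_norm C)) _.
apply: le_lt_trans (ler_wpM2l (normr_ge0 C) (ltW std)) _.
by rewrite mulrA ltr_pdivrMr // mulrDr mulr1 [X in X < _]mulrC ltrDl.
Qed.

Lemma lipschitz_le_left c : a < b ->
  (forall u, a <= u -> u < b -> g u <= c) -> g b <= c.
Proof.
move=> ab le_c; apply/ler_addgt0Pr => e e0.
have [d d0 step] := lipschitz_small_step e0.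
pose u := Num.max a (b - d / 2).
have au : a <= u by rewrite le_max lexx.
have ub : u < b by rewrite gt_max ab ltrBlDr ltrDl divr_gt0.
have bu : b - u < d.
  have : b - d / 2 <= u by rewrite le_max lexx orbT.
  have : d / 2 < d by rewrite ltr_pdivrMr // ltr_pMr // ltr1n.
  lra.
have := step u b au (ltW ub) (lexx b) bu.
have := le_c u au ub.
rewrite ltr_norml; lra.
Qed.

Lemma lipschitz_lt_right c : a < b -> g a < c ->
  exists2 d, 0 < d & forall s, a <= s -> s < a + d -> g s < c.
Proof.
move=> ab ac; have gap : 0 < c - g a by rewrite subr_gt0.
have [d d0 step] := lipschitz_small_step gap.
exists (Num.min d (b - a)) => [|s a_s]; first by rewrite lt_min d0 subr_gt0.
rewrite -ltrBlDl lt_min => /andP[sd sb].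
have sb' : s <= b by rewrite -(subrK a s) -lerBrDr ltW.
by have := step a s (lexx a) a_s sb' sd; rewrite ltr_norml; lra.
Qed.

End Lipschitz.
End Reals.

Section Integrals.
Variable R : realType.
Local Notation mu := (@lebesgue_measure R).

Lemma lebesgue_measure_itv_oc (s t : R) : s <= t -> mu `]s, t] = (t - s)%:E.
Proof.
move=> st; rewrite lebesgue_measure_itv /= lte_fin.
have [_|ts] := ltP s t; first by rewrite EFinD.
suff -> : t = s by rewrite subrr.
by apply/eqP; rewrite eq_le st ts.
Qed.

Lemma Rintegral_itv_le_cst (f : R -> R) (c s t : R) : s <= t ->
  mu.-integrable `]s, t] (EFin \o f) ->
  (forall r, s < r <= t -> f r <= c) -> \int[mu]_(x in `]s, t]) f x <= c * (t - s).
Proof.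
move=> st f_int f_le.
have mu_fin : (mu `]s, t] < +oo)%E by rewrite lebesgue_measure_itv_oc // ltry.
rewrite -[t - s]/(fine (t - s)%:E) -lebesgue_measure_itv_oc // -Rintegral_cst //.
have c_int : mu.-integrable `]s, t] (EFin \o cst c).
  apply: measurable_bounded_integrable => //; exists `|c|; split; first exact: num_real.
  by move=> x cx r _ /=; rewrite (le_trans _ (ltW cx)).
by apply: le_Rintegral => // r; rewrite /= in_itv /=; exact: f_le.
Qed.

Lemma normr_Rintegral_itv_le (f : R -> R) (c s t : R) : s <= t ->
  mu.-integrable `]s, t] (EFin \o f) ->
  (forall r, s < r <= t -> `|f r| <= c) -> `|\int[mu]_(x in `]s, t]) f x| <= c * (t - s).
Proof.
move=> st f_int f_le; apply: le_trans (le_normr_Rintegral _ f_int) _ => //.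
exact: Rintegral_itv_le_cst (integrable_norm f_int) f_le.
Qed.

Lemma Jint0 (f : R -> R) : Jint f 0 = 0.
Proof. by rewrite /Jint set_itv1 Rintegral_set1. Qed.

Section LocallyBounded.
Variables (T : R) (f : R -> R).
Hypothesis f_mlb : mlb T f.

Lemma mlb_integrable (A : set R) t : 0 <= t -> t < T -> measurable A -> A `<=` `[0, t] ->
  mu.-integrable A (EFin \o f).
Proof.
move=> t0 tT mA At; have [f_meas f_bd] := f_mlb.
apply: measurable_bounded_integrable => //.
- apply: le_lt_trans (le_measure mu (mem_set mA) (mem_set (measurable_itv `[0, t])) At) _.
  by have /= -> := lebesgue_measure_itv `[0, t]%R; case: ifP => _; rewrite ?ltry.
- apply: measurable_funS f_meas => // x /At /=; rewrite !in_itv /= => /andP[-> xt].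
  exact: le_lt_trans xt tT.
- have [|M fM] := f_bd t; first by rewrite t0.
  exists M; split; first exact: num_real.
  by move=> x Mx r /At /=; rewrite in_itv /= => /fM /le_trans; apply; exact: ltW.
Qed.

Lemma mlb_integrable_itv_oc s t : 0 <= s -> s <= t -> t < T ->
  mu.-integrable `]s, t] (EFin \o f).
Proof.
move=> s0 st tT; apply: (mlb_integrable (le_trans s0 st) tT) => // x /=.
by rewrite !in_itv /= => /andP[/ltW sx ->]; rewrite (le_trans s0 sx).
Qed.

Lemma JintB s t : 0 <= s -> s <= t -> t < T ->
  Jint f t - Jint f s = \int[mu]_(x in `]s, t]) f x.
Proof.
move=> s0 st tT; apply: Rintegral_itvB; rewrite ?bnd_simp //.
exact: mlb_integrable (le_trans s0 st) tT _ _.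
Qed.

Lemma Jint_lipschitz t1 : 0 <= t1 -> t1 < T -> exists M, forall s t,
  0 <= s -> s <= t -> t <= t1 -> `|Jint f t - Jint f s| <= M * (t - s).
Proof.
move=> t10 t1T; have [|M fM] := f_mlb.2 t1; first by rewrite t10.
exists M => s t s0 st tt1; have tT := le_lt_trans tt1 t1T.
rewrite JintB //; apply: normr_Rintegral_itv_le; rewrite ?mlb_integrable_itv_oc //.
by move=> r /andP[sr rt]; apply: fM; rewrite (le_trans s0 (ltW sr)) (le_trans rt tt1).
Qed.

End LocallyBounded.
End Integrals.

Lemma exists_other (B : eqType) (b c1 c2 : B) :
  c1 != c2 -> exists2 c, c != b & (c = c1 \/ c = c2).
Proof.
move=> c12; have [e|] := eqVneq c1 b; last by exists c1; last left.
by exists c2; [rewrite -e eq_sym | right].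
Qed.

Section BipartiteCore.
Variables (A B : eqType) (F : A -> B -> bool).
Hypothesis no_4cycle : forall a a' b b', a != a' -> b != b' ->
  F a b -> F a' b -> F a' b' -> F a b' -> False.
Hypothesis no_6cycle : forall a1 a2 a3 b1 b2 b3,
  a1 != a2 -> a1 != a3 -> a2 != a3 -> b1 != b2 -> b1 != b3 -> b2 != b3 ->
  F a1 b1 -> F a2 b1 -> F a2 b2 -> F a3 b2 -> F a3 b3 -> F a1 b3 -> False.
Hypothesis common_nbr_l : forall a a', a = a' \/ exists b, F a b /\ F a' b.
Hypothesis common_nbr_r : forall b b', b = b' \/ exists a, F a b /\ F a b'.

(* Otherwise [a] and [a0] share a neighbour [b]; further neighbours [c] of [a]
   and [b'] of [a0] are at distance at most 2, closing a 4- or a 6-cycle. *)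
Lemma branching_unique a0 b0 b1 a c1 c2 :
  b0 != b1 -> F a0 b0 -> F a0 b1 -> c1 != c2 -> F a c1 -> F a c2 -> a = a0.
Proof.
move=> b01 Fb0 Fb1 c12 Fc1 Fc2; have [//|aa0] := eqVneq a a0; exfalso.
have [aa0'|[b [Fab Fa0b]]] := common_nbr_l a a0; first by rewrite aa0' eqxx in aa0.
have [c cb Fac] : exists2 c, c != b & F a c.
  have [c cb c_eq] := exists_other b c12; exists c => //; by case: c_eq => ->.
have [b' b'b Fa0b'] : exists2 b', b' != b & F a0 b'.
  have [b' b'b b'_eq] := exists_other b b01; exists b' => //; by case: b'_eq => ->.
have bc : b != c by rewrite eq_sym.
have bb' : b != b' by rewrite eq_sym.
have [cb'|cb'] := eqVneq c b'.
  by rewrite -cb' in Fa0b'; exact: no_4cycle aa0 bc Fab Fa0b Fa0b' Fac.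
have [/eqP|[a' [Fa'c Fa'b']]] := common_nbr_r c b'; first by rewrite (negbTE cb').
have [a'a|aa'] := eqVneq a' a.
  by rewrite a'a in Fa'b'; exact: no_4cycle aa0 bb' Fab Fa0b Fa0b' Fa'b'.
have [a'a0|a0a'] := eqVneq a' a0.
  by rewrite a'a0 in Fa'c; exact: no_4cycle aa0 bc Fab Fa0b Fa'c Fac.
by apply: (no_6cycle aa0 _ _ bb' bc _ Fab Fa0b Fa0b' Fa'b' Fa'c Fac); rewrite eq_sym.
Qed.

End BipartiteCore.

Lemma walk_size_le3 (V : eqType) (e : rel V) u v p :
  walk e u v p -> (size p <= 3)%N ->
  [\/ u = v, e u v, exists x, e u x /\ e x v | exists x y, [/\ e u x, e x y & e y v]].
Proof.
rewrite /walk; case: p => [|a [|b [|c [|d p]]]] //=.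
- by move=> /eqP ->; constructor 1.
- by rewrite andbT => /andP[h /eqP <-]; constructor 2.
- by rewrite andbT => /andP[/andP[h1 h2] /eqP <-]; constructor 3; exists a.
- by rewrite andbT => /andP[/andP[h1 /andP[h2 h3]] /eqP <-]; constructor 4; exists a, b.
Qed.

Lemma nonleafP (V : finType) (e : rel V) u :
  nonleaf e u <-> exists v1 v2, [/\ v1 != v2, e u v1 & e u v2].
Proof.
rewrite /nonleaf /degree; split => [/card_gt1P [v1 [v2 []]]|[v1 [v2 [v12 e1 e2]]]].
  by rewrite !inE => e1 e2 v12; exists v1, v2.
by apply/card_gt1P; exists v1, v2; rewrite !inE.
Qed.

Lemma diameter3_nonleaf_edge (V : finType) (e : rel V) : symmetric e ->
  has_diameter e 3 -> exists x y, [/\ e x y, nonleaf e x & nonleaf e y].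
Proof.
move=> e_sym [close [u [v [_ far]]]].
have [p /andP[uv_p p3]] := close u v.
have no_short q : walk e u v q -> (size q < 3)%N -> False.
  by move=> /far; rewrite leqNgt => /negP.
have [x [y [ux xy yv]]] : exists x y, [/\ e u x, e x y & e y v].
  case: (walk_size_le3 uv_p p3) => [uv|uv|[x [ux xv]]|//]; exfalso.
  - by apply: (no_short [::]) => //; rewrite /walk /= uv.
  - by apply: (no_short [:: v]) => //; rewrite /walk /= uv eqxx.
  - by apply: (no_short [:: x; v]) => //; rewrite /walk /= ux xv eqxx.
have uy : u != y.
  by apply/eqP => uy; apply: (no_short [:: v]) => //; rewrite /walk /= uy yv eqxx.
have xv : x != v.
  by apply/eqP => xv; apply: (no_short [:: v]) => //; rewrite /walk /= -xv ux eqxx.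
exists x, y; split => //; apply/nonleafP.
- by exists u, y; rewrite e_sym ux xy.
- by exists x, v; rewrite e_sym xy yv.
Qed.

Section DoubleStar.
Variables (nI nJ : nat) (E : 'I_nI -> 'I_nJ -> bool).
Hypothesis E_acyclic : acyclic_graph (adj E).
Hypothesis E_close : forall u v, exists p, walk (adj E) u v p && (size p <= 3)%N.

Lemma adj_sym : symmetric (adj E).
Proof. by case=> [i|j] [i'|j']. Qed.

Lemma adj_no_4cycle i i' j j' : i != i' -> j != j' ->
  E i j -> E i' j -> E i' j' -> E i j' -> False.
Proof.
move=> ii' jj' e1 e2 e3 e4.
have := E_acyclic (c := [:: inl i; inr j; inl i'; inr j']) isT.
by rewrite /= !inE /eq_op /= (negbTE ii') (negbTE jj') e1 e2 e3 e4 => /(_ isT).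
Qed.

Lemma adj_no_6cycle i1 i2 i3 j1 j2 j3 :
  i1 != i2 -> i1 != i3 -> i2 != i3 -> j1 != j2 -> j1 != j3 -> j2 != j3 ->
  E i1 j1 -> E i2 j1 -> E i2 j2 -> E i3 j2 -> E i3 j3 -> E i1 j3 -> False.
Proof.
move=> i12 i13 i23 j12 j13 j23 e1 e2 e3 e4 e5 e6.
have := E_acyclic (c := [:: inl i1; inr j1; inl i2; inr j2; inl i3; inr j3]) isT.
rewrite /= !inE /eq_op /= (negbTE i12) (negbTE i13) (negbTE i23).
by rewrite (negbTE j12) (negbTE j13) (negbTE j23) e1 e2 e3 e4 e5 e6 => /(_ isT).
Qed.

Lemma common_nbr_I i i' : i = i' \/ exists j, E i j /\ E i' j.
Proof.
have [p /andP[ii'_p p3]] := E_close (inl i) (inl i').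
case: (walk_size_le3 ii'_p p3) => [[->]|//|[x [e1 e2]]|[x [y [e1 e2 e3]]]].
- by left.
- by case: x e1 e2 => // j e1 e2; right; exists j.
- by case: x y e1 e2 e3 => [?|?] [?|?].
Qed.

Lemma common_nbr_J j j' : j = j' \/ exists i, E i j /\ E i j'.
Proof.
have [p /andP[jj'_p p3]] := E_close (inr j) (inr j').
case: (walk_size_le3 jj'_p p3) => [[->]|//|[x [e1 e2]]|[x [y [e1 e2 e3]]]].
- by left.
- by case: x e1 e2 => // i e1 e2; right; exists i.
- by case: x y e1 e2 e3 => [?|?] [?|?].
Qed.

Lemma nonleaf_inl i : nonleaf (adj E) (inl i) -> exists j j', [/\ j != j', E i j & E i j'].
Proof. by move=> /nonleafP [[?|j] [[?|j'] [jj' e e']]] //; exists j, j'. Qed.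

Lemma nonleaf_inr j : nonleaf (adj E) (inr j) -> exists i i', [/\ i != i', E i j & E i' j].
Proof. by move=> /nonleafP [[i|?] [[i'|?] [ii' e e']]] //; exists i, i'. Qed.

Lemma nonleaf_I_unique i0 i :
  nonleaf (adj E) (inl i0) -> nonleaf (adj E) (inl i) -> i = i0.
Proof.
move=> /nonleaf_inl [j0 [j1 [j01 e0 e1]]] /nonleaf_inl [j [j' [jj' e e']]].
exact: (branching_unique adj_no_4cycle adj_no_6cycle common_nbr_I common_nbr_J j01 e0 e1 jj' e e').
Qed.

Lemma nonleaf_J_unique j0 j :
  nonleaf (adj E) (inr j0) -> nonleaf (adj E) (inr j) -> j = j0.
Proof.
move=> /nonleaf_inr [i0 [i1 [i01 e0 e1]]] /nonleaf_inr [i [i' [ii' e e']]].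
apply: (branching_unique (F := fun j i => E i j) _ _ common_nbr_J common_nbr_I i01 e0 e1 ii' e e').
- by move=> j1 j2 i1' i2' j12 i12 f1 f2 f3 f4; exact: adj_no_4cycle i12 j12 f1 f4 f3 f2.
- move=> j1 j2 j3 i1' i2' i3' j12 j13 j23 i12 i13 i23 f1 f2 f3 f4 f5 f6.
  by apply: (adj_no_6cycle i12 i13 i23 _ _ _ f2 f3 f4 f5 f6 f1); rewrite // eq_sym.
Qed.

Lemma nonleaf_double_star i0 j0 :
  nonleaf (adj E) (inl i0) -> nonleaf (adj E) (inr j0) ->
  forall v, nonleaf (adj E) v -> v = inl i0 \/ v = inr j0.
Proof.
move=> ni0 nj0 [i ni|j nj]; first by left; rewrite (nonleaf_I_unique ni0 ni).
by right; rewrite (nonleaf_J_unique nj0 nj).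
Qed.

End DoubleStar.

Section Nonidling.
Variables (R : realType) (nI nJ : nat) (E : 'I_nI -> 'I_nJ -> bool).
Variables (mu : 'I_nI -> 'I_nJ -> R) (theta : 'I_nI -> R) (j0 : 'I_nJ).
Hypothesis theta_ge0 : forall i, 0 <= theta i.
Hypothesis theta_le_mu : forall i, theta i <= mu i j0.
Hypothesis leaf_off_j0 : forall j i i', j != j0 -> E i j -> E i' j -> i = i'.

Variables (T : R) (psi : 'I_nI -> 'I_nJ -> R -> R) (y : 'I_nI -> R -> R).
Variables (z : 'I_nJ -> R -> R) (w : 'I_nI -> R -> R).
Hypothesis psi_mlb : forall i j, mlb T (psi i j).
Hypothesis y_mlb : forall i, mlb T (y i).
Hypothesis psi_off_E : forall i j t, 0 <= t < T -> ~~ E i j -> psi i j t = 0.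
Hypothesis balance_I : forall i t, 0 <= t < T ->
  \sum_(j < nJ) (psi i j t + mu i j * Jint (psi i j) t) = w i t - y i t - theta i * Jint (y i) t.
Hypothesis balance_J : forall j t, 0 <= t < T -> \sum_(i < nI) psi i j t = - z j t.
Hypothesis y_ge0 : forall i t, 0 <= t < T -> 0 <= y i t.
Hypothesis z_ge0 : forall j t, 0 <= t < T -> 0 <= z j t.
Hypothesis complementarity : forall t, 0 <= t < T ->
  Num.min (\sum_(i < nI) y i t) (\sum_(j < nJ) z j t) = 0.
Hypothesis w0_gt0 : forall i, 0 < w i 0.
Hypothesis w_incr : forall i, strictly_increasing_on T (w i).

Definition outflow i t := \sum_(j < nJ) mu i j * Jint (psi i j) t + theta i * Jint (y i) t.

Lemma outflow_balance i t : 0 <= t < T ->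
  \sum_(j < nJ) psi i j t + y i t = w i t - outflow i t.
Proof. by move=> tT; have := balance_I i tT; rewrite big_split /= /outflow; lra. Qed.

Lemma outflow0 i : outflow i 0 = 0.
Proof. by rewrite /outflow Jint0 mulr0 addr0 big1 // => j _; rewrite Jint0 mulr0. Qed.

Lemma z_eq0_of_outflow_lt t : 0 <= t < T -> (forall i, outflow i t < w i t) ->
  forall j, z j t = 0.
Proof.
move=> tT outflow_lt.
suff sum_z0 : \sum_j z j t = 0.
  by move=> j; apply: (psumr_eq0P _ sum_z0) => // k _; exact: z_ge0.
have := complementarity tT; rewrite minEle; case: ifP => // _ sum_y0.
have y0 i : y i t = 0 by apply: (psumr_eq0P _ sum_y0) => // k _; exact: y_ge0.
have sum_z : \sum_j z j t = - \sum_i (w i t - outflow i t).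
  under eq_bigr => j _ do rewrite -[z j t]opprK -balance_J //.
  rewrite sumrN exchange_big /=; congr (- _); apply: eq_bigr => i _.
  by rewrite -outflow_balance // y0 addr0.
have : 0 <= \sum_j z j t by apply: sumr_ge0 => j _; exact: z_ge0.
have : 0 <= \sum_i (w i t - outflow i t).
  by apply: sumr_ge0 => i _; rewrite subr_ge0 ltW.
lra.
Qed.

Lemma psi_eq0_off_j0 t : 0 <= t < T -> (forall j, z j t = 0) ->
  forall i j, j != j0 -> psi i j t = 0.
Proof.
move=> tT z0 i j jj0; case Eij: (E i j); last by rewrite psi_off_E ?Eij.
have := balance_J j tT; rewrite z0 oppr0 (bigD1 i) //= big1 ?addr0 // => i' i'i.
by apply: psi_off_E => //; apply: contra i'i => Ei'j; rewrite (leaf_off_j0 jj0 Ei'j Eij).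
Qed.

Lemma w_nondecr i s t : 0 <= s -> s <= t -> t < T -> w i s <= w i t.
Proof.
move=> s0; rewrite le_eqVlt => /predU1P[-> //|st] tT.
exact/ltW/w_incr.
Qed.

Lemma outflow_lipschitz i t1 : 0 <= t1 -> t1 < T -> exists C, forall s t,
  0 <= s -> s <= t -> t <= t1 -> `|outflow i t - outflow i s| <= C * (t - s).
Proof.
move=> t10 t1T.
have /choice [M psi_lip] := fun j => Jint_lipschitz (psi_mlb i j) t10 t1T.
have [My y_lip] := Jint_lipschitz (y_mlb i) t10 t1T.
exists (\sum_j `|mu i j| * M j + `|theta i| * My) => s t s0 st tt1.
rewrite /outflow opprD addrACA -sumrB -mulrBr mulrDl.
apply: le_trans (ler_normD _ _) (lerD _ _).
  apply: le_trans (ler_norm_sum _ _ _) _; rewrite mulr_suml; apply: ler_sum => j _.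
  by rewrite -mulrBr normrM -mulrA ler_wpM2l // psi_lip.
by rewrite normrM -mulrA ler_wpM2l // y_lip.
Qed.

Local Notation lambda := (@lebesgue_measure R).

Lemma outflow_increment_le i s u B : 0 <= s -> s <= u -> u < T ->
  (forall r, s < r <= u -> forall j, z j r = 0) ->
  (forall r, s < r <= u -> w i r - outflow i r <= B) ->
  outflow i u - outflow i s <= mu i j0 * (B * (u - s)).
Proof.
move=> s0 su uT z0 wB.
have mu_ge0 : 0 <= mu i j0 := le_trans (theta_ge0 i) (theta_le_mu i).
have r_range r : s < r <= u -> 0 <= r < T.
  by case/andP => sr ru; rewrite (le_trans s0 (ltW sr)) (le_lt_trans ru uT).
have int_psi j := mlb_integrable_itv_oc (psi_mlb i j) s0 su uT.
have int_y := mlb_integrable_itv_oc (y_mlb i) s0 su uT.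
have psi_off j : j != j0 -> \int[lambda]_(r in `]s, u]) psi i j r = 0.
  move=> jj0; rewrite (@eq_Rintegral _ _ _ _ _ (cst 0)) ?Rintegral_cst ?mul0r // => r.
  by rewrite inE /= in_itv /= => r_su; exact: psi_eq0_off_j0 (r_range r r_su) (z0 r r_su) i j jj0.
have -> : outflow i u - outflow i s =
    mu i j0 * \int[lambda]_(r in `]s, u]) psi i j0 r + theta i * \int[lambda]_(r in `]s, u]) y i r.
  rewrite /outflow opprD addrACA -sumrB -mulrBr (JintB (y_mlb i)) //; congr (_ + _).
  rewrite (bigD1 j0) //= big1 ?addr0 => [|j jj0]; first by rewrite -mulrBr (JintB (psi_mlb i j0)).
  by rewrite -mulrBr (JintB (psi_mlb i j)) // psi_off ?mulr0.
have int_y_ge0 : 0 <= \int[lambda]_(r in `]s, u]) y i r.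
  by apply: Rintegral_ge0 => r /r_range; exact: y_ge0.
apply: le_trans (_ : mu i j0 * \int[lambda]_(r in `]s, u]) (psi i j0 r + y i r) <= _).
  rewrite RintegralD // mulrDr lerD2l; exact: ler_wpM2r.
rewrite ler_wpM2l //; apply: Rintegral_itv_le_cst => //.
  have := @integrableD _ _ _ lambda _ (measurable_itv `]s, u]) _ _ (int_psi j0) int_y.
  by apply: eq_integrable => // r _ /=; rewrite EFinD.
move=> r r_su; have r_T := r_range r r_su.
apply: le_trans (wB r r_su); rewrite -outflow_balance // (bigD1 j0) //= big1 ?addr0 //.
by move=> j jj0; exact: psi_eq0_off_j0 r_T (z0 r r_su) i j jj0.
Qed.

Lemma outflow_increment_le_open i s t B : 0 <= s -> s < t -> t < T -> 0 <= B ->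
  (forall r, s < r < t -> forall j, z j r = 0) ->
  (forall r, s < r < t -> w i r - outflow i r <= B) ->
  outflow i t - outflow i s <= mu i j0 * (B * (t - s)).
Proof.
move=> s0 st tT B0 z0 wB; have [C lipC] := outflow_lipschitz i (le_trans s0 (ltW st)) tT.
have mu_ge0 : 0 <= mu i j0 := le_trans (theta_ge0 i) (theta_le_mu i).
rewrite lerBlDl; apply: (@lipschitz_le_left _ _ C s) => // [s' t' ss' s't' t't|u su ut].
  by apply: lipC; rewrite // (le_trans s0).
apply: le_trans (_ : outflow i s + mu i j0 * (B * (u - s)) <= _).
  rewrite -lerBlDl; apply: outflow_increment_le (lt_trans ut tT) _ _ => // r /andP[sr ru].
    by apply: z0; rewrite sr (le_lt_trans ru ut).
  by apply: wB; rewrite sr (le_lt_trans ru ut).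
by rewrite lerD2l ler_wpM2l // ler_wpM2l // lerD2r ltW.
Qed.

Lemma outflow_lt_of_before t : 0 < t -> t < T ->
  (forall s, 0 <= s < t -> forall i, outflow i s < w i s) ->
  forall i, outflow i t < w i t.
Proof.
move=> t_gt0 tT before i; rewrite ltNge; apply/negP => w_le.
have m_ge0 : 0 <= mu i j0 := le_trans (theta_ge0 i) (theta_le_mu i).
have [del /andP[del_gt0 del_le] m_del] := small_step_for_rate m_ge0 t_gt0.
pose s0 := t - del; pose h s := w i t - outflow i s; pose A := [set s | s0 <= s < t].
have s0_ge0 : 0 <= s0 by rewrite subr_ge0.
have s0t : s0 < t by rewrite ltrBlDr ltrDl.
have halve B : 0 <= B -> (forall s, A s -> h s <= B) -> forall s, A s -> h s <= B / 2.
  move=> B0 hB s /andP[s0s st]; have s_ge0 := le_trans s0_ge0 s0s.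
  have incr : outflow i t - outflow i s <= mu i j0 * (B * (t - s)).
    apply: outflow_increment_le_open => // r /andP[sr rt]; have r_ge0 := le_trans s_ge0 (ltW sr).
      apply: z_eq0_of_outflow_lt => [|k]; first by rewrite r_ge0 (lt_trans rt tT).
      by apply: before; rewrite r_ge0.
    apply: le_trans (hB r _); last by rewrite /A /= (le_trans s0s (ltW sr)) rt.
    by rewrite /h lerD2r w_nondecr // ltW.
  have : mu i j0 * (B * (t - s)) <= B / 2.
    have ts_del : t - s <= del by rewrite lerBlDl -lerBlDr.
    rewrite mulrCA ler_wpM2l //; exact: le_trans (ler_wpM2l m_ge0 ts_del) m_del.
  by rewrite /h; lra.
have h_ub : exists B, forall s, A s -> h s <= B.
  have [C lipC] := outflow_lipschitz i (ltW t_gt0) tT.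
  exists (`|C| * t) => s /andP[s0s st]; have s_ge0 := le_trans s0_ge0 s0s.
  have := le_trans (ler_norm _) (lipC s t s_ge0 (ltW st) (lexx t)).
  have : C * (t - s) <= `|C| * t.
    apply: le_trans (ler_wpM2r _ (ler_norm C)) (ler_wpM2l (normr_ge0 C) _); lra.
  by rewrite /h; lra.
have := le0_of_le_half_ubound h_ub halve (_ : A s0); rewrite /A /= lexx s0t => /(_ isT).
have := before s0 _ i; rewrite s0_ge0 s0t => /(_ isT).
have := w_nondecr i s0_ge0 (ltW s0t) tT.
by rewrite /h; lra.
Qed.

Lemma outflow_lt_after t : 0 <= t < T -> (forall i, outflow i t < w i t) ->
  exists2 d, 0 < d & forall s, t < s < t + d -> s < T -> forall i, outflow i s < w i s.
Proof.
move=> /andP[t0 tT] lt_t.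
have [tt1 t1T] := midf_lt tT; set t1 := (t + T) / 2 in tt1 t1T.
have [d d0 near_t] : exists2 d, 0 < d & forall i r, 0 <= r < d -> outflow i (t + r) < w i t.
  apply: common_radius => i.
  have [C lipC] := outflow_lipschitz i (le_trans t0 (ltW tt1)) t1T.
  have lipC' s u : t <= s -> s <= u -> u <= t1 ->
      `|outflow i u - outflow i s| <= C * (u - s).
    by move=> ts su ut1; apply: lipC; rewrite // (le_trans t0).
  have [d d0 lt_d] := lipschitz_lt_right lipC' tt1 (lt_t i).
  by exists d => // r /andP[r0 rd]; apply: lt_d; rewrite ?lerDl // ltrD2l.
exists d => // s /andP[ts std] sT i.
have := near_t i (s - t); rewrite subr_ge0 ltW //= ltrBlDl std addrC subrK => /(_ isT).
by move/lt_le_trans; apply; apply: w_nondecr => //; exact: ltW.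
Qed.

Lemma outflow_lt_w t : 0 <= t < T -> forall i, outflow i t < w i t.
Proof.
apply: (@real_induction _ T (fun t => forall i, outflow i t < w i t)); last first.
  exact: outflow_lt_after.
move=> s /andP[s0 sT] before; have [<- i|s_ne0] := eqVneq 0 s; first by rewrite outflow0.
by apply: outflow_lt_of_before sT before; rewrite lt_neqAle s_ne0.
Qed.

Lemma z_eq0 t : 0 <= t < T -> forall j, z j t = 0.
Proof. by move=> tT; apply: z_eq0_of_outflow_lt tT (outflow_lt_w tT). Qed.

End Nonidling.

Lemma nonidling_of_leaves (R : realType) nI nJ (E : 'I_nI -> 'I_nJ -> bool)
    (mu : 'I_nI -> 'I_nJ -> R) (theta : 'I_nI -> R) (j0 : 'I_nJ) :
  (forall i, 0 <= theta i) -> (forall i, theta i <= mu i j0) ->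
  (forall j i i', j != j0 -> E i j -> E i' j -> i = i') ->
  nonidling E mu theta.
Proof.
move=> theta_ge0 theta_le_mu leaf T _ psi y z w psi_mlb y_mlb _ _ psi_off_E balance_I balance_J.
move=> y_ge0 z_ge0 complementarity w0_gt0 w_incr _.
exact: (z_eq0 theta_ge0 theta_le_mu leaf psi_mlb y_mlb psi_off_E balance_I balance_J
  y_ge0 z_ge0 complementarity w0_gt0 w_incr).
Qed.

Theorem lemma3 (R : realType) (nI nJ : nat) (E : 'I_nI -> 'I_nJ -> bool)
  (mu : 'I_nI -> 'I_nJ -> R) (theta : 'I_nI -> R)
  (hmuE : forall i j, E i j -> 0 < mu i j)
  (hmu0 : forall i j, ~~ E i j -> mu i j = 0)
  (htheta : forall i, 0 <= theta i)
  (htree : is_tree (adj E))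
  (hdiam : has_diameter (adj E) 3) :
  (exists (i0 : 'I_nI) (j0 : 'I_nJ),
     nonleaf (adj E) (inl i0) /\ nonleaf (adj E) (inr j0) /\
     forall v, nonleaf (adj E) v -> v = inl i0 \/ v = inr j0) /\
  (forall j0 : 'I_nJ, nonleaf (adj E) (inr j0) ->
     (forall i, theta i <= mu i j0) ->
     nonidling E mu theta).
Proof.
have [_ acyclic] := htree; have close := hdiam.1.
split.
  have [x [y [xy nx ny]]] := diameter3_nonleaf_edge (@adj_sym _ _ E) hdiam.
  case: x y xy nx ny => [i|j] [i'|j'] // _ nx ny.
    by exists i, j'; do !split => //; exact: nonleaf_double_star.
  by exists i', j; do !split => //; exact: nonleaf_double_star.
move=> j0 nj0 theta_le_mu; apply: nonidling_of_leaves htheta theta_le_mu _.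
move=> j i i' jj0 Eij Ei'j; apply: contraNeq jj0 => ii'.
apply/eqP/(nonleaf_J_unique acyclic close nj0)/nonleafP.
by exists (inl i), (inl i').
Qed.
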